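(* Let $0<\lambda<1$, $0<\beta<1$, and let $\mathcal{A}$ be the (not necessarily unital) associative subalgebra of $\operatorname{End}(\mathcal{B}'(\lambda,\beta))\cong M_4(\mathbb{R})$ generated by the left multiplication operators $l_o,l_a,l_b$. Then: 1. if $\lambda=\beta=\tfrac12$, then $\mathcal{A}=M_0$; 2. if $\lambda\neq\beta$ and $\lambda=1-\beta$, then $\mathcal{A}=M_1$; 3. if $\lambda=\beta$ and $\lambda\neq1-\beta$, then $\mathcal{A}=M_2$; 4. if $\lambda\neq\beta$ and $\lambda\neq1-\beta$, then $\mathcal{A}=M_3$.
   Context: For real parameters $0<\lambda<1$ and $0<\beta<1$, $\mathcal{B}'(\lambda,\beta)$ denotes the commutative (non-associative) $4$-dimensional real algebra with basis $\{o,a,b,c\}$ whose bilinear commutative multiplication $\circ$ is determined by $o\circ o=o$, $o\circ a=\lambda a$, $o\circ b=\lambda b$, $a\circ a=a$, $b\circ b=b$, $a\circ b=\frac{\lambda-\beta}{\lambda}a+\frac{\lambda+\beta-1}{\lambda}b+c$, and $c\circ x=x\circ c=0$ for every $x$. (In the paper the basis vector $c$ is written $ab$.) For $x$ in the algebra, $l_x(y)=x\circ y$; operators are identified with $4\times4$ real matrices with respect to the ordered basis $(o,a,b,c)$, the $j$-th column being the coordinate vector of the image of the $j$-th basis vector. Thus $l_o=E_{11}+\lambda E_{22}+\lambda E_{33}$, $l_a=\lambda E_{21}+E_{22}+\frac{\lambda-\beta}{\lambda}E_{23}+\frac{\lambda+\beta-1}{\lambda}E_{33}+E_{43}$, $l_b=\frac{\lambda-\beta}{\lambda}E_{22}+\lambda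 E_{31}+\frac{\lambda+\beta-1}{\lambda}E_{32}+E_{33}+E_{42}$, where $E_{ij}$ are matrix units. Define the subspaces of $M_4(\mathbb{R})$: $M_0=\operatorname{span}\{E_{11},E_{21},E_{22},E_{31},E_{33},E_{41},E_{42},E_{43}\}$, $M_1=M_0+\mathbb{R}E_{23}$, $M_2=M_0+\mathbb{R}E_{32}$, $M_3=M_0+\mathbb{R}E_{23}+\mathbb{R}E_{32}$. *)

(* real numbers rendered as an arbitrary realFieldType R
   (the statement is purely algebraic). *)
From HB Require Import structures.
From mathcomp Require Import all_boot all_order all_algebra.
Set Implicit Arguments. Unset Strict Implicit. Unset Printing Implicit Defensive.
Import Order.TTheory GRing.Theory Num.Theory.
Local Open Scope ring_scope.

(* Matrix unit E_ij with 1-based indices i, j in {1,...,4}. *)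
Definition E (R : realFieldType) (i j : nat) : 'M[R]_4 :=
  delta_mx (inord i.-1) (inord j.-1).

(* Left multiplication operators of B'(lam, bet) w.r.t. basis (o,a,b,c). *)
Definition l_o (R : realFieldType) (lam : R) : 'M[R]_4 :=
  E R 1 1 + lam *: E R 2 2 + lam *: E R 3 3.

Definition l_a (R : realFieldType) (lam bet : R) : 'M[R]_4 :=
  lam *: E R 2 1 + E R 2 2 + ((lam - bet) / lam) *: E R 2 3
  + ((lam + bet - 1) / lam) *: E R 3 3 + E R 4 3.

Definition l_b (R : realFieldType) (lam bet : R) : 'M[R]_4 :=
  ((lam - bet) / lam) *: E R 2 2 + lam *: E R 3 1
  + ((lam + bet - 1) / lam) *: E R 3 2 + E R 3 3 + E R 4 2.

Inductive gen_alg (R : realFieldType) (S : 'M[R]_4 -> Prop) : 'M[R]_4 -> Prop :=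
| ga_gen A : S A -> gen_alg S A
| ga_add A B : gen_alg S A -> gen_alg S B -> gen_alg S (A + B)
| ga_scale (c : R) A : gen_alg S A -> gen_alg S (c *: A)
| ga_mul A B : gen_alg S A -> gen_alg S B -> gen_alg S (A *m B).

Definition gens (R : realFieldType) (lam bet : R) (A : 'M[R]_4) : Prop :=
  A = l_o lam \/ A = l_a lam bet \/ A = l_b lam bet.

Definition inM0 (R : realFieldType) (A : 'M[R]_4) : Prop :=
  exists c1 c2 c3 c4 c5 c6 c7 c8 : R,
    A = c1 *: E R 1 1 + c2 *: E R 2 1 + c3 *: E R 2 2 + c4 *: E R 3 1
      + c5 *: E R 3 3 + c6 *: E R 4 1 + c7 *: E R 4 2 + c8 *: E R 4 3.

Definition inM1 (R : realFieldType) (A : 'M[R]_4) : Prop :=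
  exists (B : 'M[R]_4) (d : R), inM0 B /\ A = B + d *: E R 2 3.

Definition inM2 (R : realFieldType) (A : 'M[R]_4) : Prop :=
  exists (B : 'M[R]_4) (d : R), inM0 B /\ A = B + d *: E R 3 2.

Definition inM3 (R : realFieldType) (A : 'M[R]_4) : Prop :=
  exists (B : 'M[R]_4) (d e : R), inM0 B /\ A = B + d *: E R 2 3 + e *: E R 3 2.

(* Write p = (lam - bet)/lam and q = (lam + bet - 1)/lam for the coefficients of
   E23 in l_a and of E32 in l_b.  All three generators are supported in the
   relation M_0 + [p != 0] E23 + [q != 0] E32 on positions, which is transitive,
   and matrices supported on a transitive relation form an algebra: this bounds
   the generated algebra from above.  Conversely, since lam is neither 0 nor 1,
   E11 and D = E22 + E33 are polynomials in l_o, and every allowed matrix unit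
   is then cut out of l_a and l_b by multiplying with E11 and D and taking
   linear combinations; E23 needs p != 0 and E32 needs q != 0. *)

From HB Require Import structures.
From mathcomp Require Import all_boot all_order all_algebra.
From mathcomp Require Import ring lra.
Set Implicit Arguments. Unset Strict Implicit. Unset Printing Implicit Defensive.
Import Order.TTheory GRing.Theory Num.Theory.
Local Open Scope ring_scope.

Section Support.
Variables (R : pzRingType) (n : nat) (r : rel 'I_n).

Definition mx_supported (A : 'M[R]_n) := forall i j, ~~ r i j -> A i j = 0.

Lemma mx_supported_add A B :
  mx_supported A -> mx_supported B -> mx_supported (A + B).
Proof. by move=> hA hB i j rij; rewrite mxE hA ?hB ?addr0. Qed.

Lemma mx_supported_scale c A : mx_supported A -> mx_supported (c *: A).
Proof. by move=> hA i j rij; rewrite mxE hA ?mulr0. Qed.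

Lemma mx_supported_mul A B : transitive r ->
  mx_supported A -> mx_supported B -> mx_supported (A *m B).
Proof.
move=> r_trans hA hB i j rij; rewrite mxE big1 // => k _.
have [rik | /hA-> ] := boolP (r i k); last by rewrite mul0r.
have /hB-> : ~~ r k j by apply: contra rij; apply: r_trans.
by rewrite mulr0.
Qed.

End Support.

Lemma gen_alg_supported (R : realFieldType) (S : 'M[R]_4 -> Prop) (r : rel 'I_4) A :
  gen_alg S 0 -> (forall i j, r i j -> gen_alg S (delta_mx i j)) ->
  mx_supported r A -> gen_alg S A.
Proof.
move=> S0 Sdelta hA; rewrite (matrix_sum_delta A).
apply: (big_ind (gen_alg S)) => // [|i _]; first exact: ga_add.
apply: (big_ind (gen_alg S)) => // [|j _]; first exact: ga_add.
have [/Sdelta | /hA->] := boolP (r i j); first exact: ga_scale.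
by rewrite scale0r.
Qed.

Definition M0_positions : seq (nat * nat) :=
  [:: (1, 1); (2, 1); (2, 2); (3, 1); (3, 3); (4, 1); (4, 2); (4, 3)].

Definition M_support (z23 z32 : bool) : rel 'I_4 := fun i j =>
  [|| (i.+1, j.+1) \in M0_positions,
      ((i.+1, j.+1) == (2, 3)) && z23 | ((i.+1, j.+1) == (3, 2)) && z32].

Lemma M_support_trans z23 z32 : transitive (M_support z23 z32).
Proof.
move=> [[|[|[|[|//]]]] ?] [[|[|[|[|//]]]] ?] [[|[|[|[|//]]]] ?];
by case: z23; case: z32.
Qed.

Lemma eq_inord (i : 'I_4) k : (k < 4)%N -> (i == inord k) = (i == k :> nat).
Proof. by move=> hk; rewrite -val_eqE /= inordK. Qed.

Lemma Ordinal_inord k (hk : (k < 4)%N) : Ordinal hk = inord k.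
Proof. by apply: val_inj; rewrite /= inordK. Qed.

Ltac mx_entries := rewrite /E ?(mxE, big_ord_recl, big_ord0) ?eq_inord //.

Ltac ord4_cases := move=> - [[|[|[|[|//]]]] ?] [[|[|[|[|//]]]] ?].

Ltac mx_entrywise :=
  apply/matrixP; intros i j; mx_entries; revert i j; ord4_cases;
  rewrite /= ?(mulr0, mul0r, mulr1, mul1r, addr0, add0r).

Lemma mul_E (R : realFieldType) i j k l : (j < 4)%N -> (k < 4)%N ->
  E R i j.+1 *m E R k.+1 l = E R i l *+ (j == k).
Proof. by move=> hj hk; rewrite /E mul_delta_mx_cond -val_eqE /= !inordK. Qed.

Ltac mx_identity :=
  do 2 rewrite ?mulmxDl ?mulmxDr -?scalemxAl -?scalemxAr ?mul_E //=
    ?(mulr0n, mulr1n, mul0mx, mulmx0, scaler0, addr0, add0r);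
  mx_entrywise.

Ltac mx_supported_entrywise :=
  intros i j; mx_entries; revert i j; ord4_cases;
  rewrite /M_support /= ?(orbF, negbK, mulr0, mulr1, addr0, add0r) //.

Section Shape.
Variable R : realFieldType.
Implicit Types (A : 'M[R]_4).

Definition M0_part A :=
  A (inord 0) (inord 0) *: E R 1 1 + A (inord 1) (inord 0) *: E R 2 1
  + A (inord 1) (inord 1) *: E R 2 2 + A (inord 2) (inord 0) *: E R 3 1
  + A (inord 2) (inord 2) *: E R 3 3 + A (inord 3) (inord 0) *: E R 4 1
  + A (inord 3) (inord 1) *: E R 4 2 + A (inord 3) (inord 2) *: E R 4 3.

Lemma M_support_decomp z23 z32 A : mx_supported (M_support z23 z32) A ->
  A = M0_part A + A (inord 1) (inord 2) *: E R 2 3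
      + A (inord 2) (inord 1) *: E R 3 2.
Proof.
move=> hA; apply/matrixP => i j; have := hA i j; mx_entries.
move: i j; ord4_cases => /= hij.
all: by [rewrite hij //; ring | rewrite !Ordinal_inord; ring].
Qed.

Lemma inM0_supported z23 z32 A : inM0 A -> mx_supported (M_support z23 z32) A.
Proof.
case=> [c1 [c2 [c3 [c4 [c5 [c6 [c7 [c8 ->]]]]]]]].
mx_supported_entrywise => _; ring.
Qed.

Lemma M0_part_inM0 A : inM0 (M0_part A).
Proof. by rewrite /M0_part; do 8 eexists. Qed.

Lemma E23_supported z32 : mx_supported (M_support true z32) (E R 2 3).
Proof. by mx_supported_entrywise. Qed.

Lemma E32_supported z23 : mx_supported (M_support z23 true) (E R 3 2).
Proof. by mx_supported_entrywise. Qed.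

Lemma mx_supported_entry23 z32 A :
  mx_supported (M_support false z32) A -> A (inord 1) (inord 2) = 0.
Proof. by apply; rewrite /M_support !inordK. Qed.

Lemma mx_supported_entry32 z23 A :
  mx_supported (M_support z23 false) A -> A (inord 2) (inord 1) = 0.
Proof. by apply; rewrite /M_support !inordK. Qed.

Lemma inM0E A : inM0 A <-> mx_supported (M_support false false) A.
Proof.
split=> [|hA]; first exact: inM0_supported.
rewrite (M_support_decomp hA) (mx_supported_entry23 hA).
by rewrite (mx_supported_entry32 hA) !scale0r !addr0; apply: M0_part_inM0.
Qed.

Lemma inM1E A : inM1 A <-> mx_supported (M_support true false) A.
Proof.
split=> [[B [d [/inM0_supported hB ->]]] | hA].
  by apply: mx_supported_add => //; apply/mx_supported_scale/E23_supported.
rewrite (M_support_decomp hA) (mx_supported_entry32 hA) scale0r addr0.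
by exists (M0_part A), (A (inord 1) (inord 2)); split; first exact: M0_part_inM0.
Qed.

Lemma inM2E A : inM2 A <-> mx_supported (M_support false true) A.
Proof.
split=> [[B [d [/inM0_supported hB ->]]] | hA].
  by apply: mx_supported_add => //; apply/mx_supported_scale/E32_supported.
rewrite (M_support_decomp hA) (mx_supported_entry23 hA) scale0r addr0.
by exists (M0_part A), (A (inord 2) (inord 1)); split; first exact: M0_part_inM0.
Qed.

Lemma inM3E A : inM3 A <-> mx_supported (M_support true true) A.
Proof.
split=> [[B [d [e [/inM0_supported hB ->]]]] | hA].
  apply: mx_supported_add; last exact/mx_supported_scale/E32_supported.
  by apply: mx_supported_add => //; apply/mx_supported_scale/E23_supported.
rewrite (M_support_decomp hA).
by exists (M0_part A), (A (inord 1) (inord 2)), (A (inord 2) (inord 1));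
  split; first exact: M0_part_inM0.
Qed.

End Shape.

Section GeneratorSupport.
Variables (R : realFieldType) (lam bet : R).

Lemma l_o_supported z23 z32 : mx_supported (M_support z23 z32) (l_o lam).
Proof. rewrite /l_o; mx_supported_entrywise => _; ring. Qed.

Lemma l_a_supported z32 : mx_supported (M_support (lam != bet) z32) (l_a lam bet).
Proof. by rewrite /l_a; mx_supported_entrywise => /eqP->; rewrite subrr mul0r. Qed.

Lemma l_b_supported z23 :
  mx_supported (M_support z23 (lam != 1 - bet)) (l_b lam bet).
Proof. by rewrite /l_b; mx_supported_entrywise => /eqP->; rewrite subrK subrr mul0r. Qed.

Lemma gen_alg_gens_supported A : gen_alg (gens lam bet) A ->
  mx_supported (M_support (lam != bet) (lam != 1 - bet)) A.
Proof.
elim=> {A} [_ [|[|]] -> | A B _ hA _ hB | c A _ hA | A B _ hA _ hB].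
- exact: l_o_supported.
- exact: l_a_supported.
- exact: l_b_supported.
- exact: mx_supported_add.
- exact: mx_supported_scale.
- exact/mx_supported_mul/hB/hA/M_support_trans.
Qed.

End GeneratorSupport.

Ltac field_nz := field; do ?[apply/andP; split].

Ltac gen_close :=
  repeat first [assumption | apply: ga_add | apply: ga_scale | apply: ga_mul].

Section Generation.
Variables (R : realFieldType) (S : 'M[R]_4 -> Prop) (lam bet : R).
Hypotheses (lam_neq0 : lam != 0) (onem_lam_neq0 : 1 - lam != 0).
Hypotheses (S_l_o : gen_alg S (l_o lam)) (S_l_a : gen_alg S (l_a lam bet))
  (S_l_b : gen_alg S (l_b lam bet)).

Local Notation p := ((lam - bet) / lam).
Local Notation q := ((lam + bet - 1) / lam).
Local Notation D := (E R 2 2 + E R 3 3).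
Local Notation X := (E R 2 2 + p *: E R 2 3 + q *: E R 3 3).
Local Notation Y := (p *: E R 2 2 + q *: E R 3 2 + E R 3 3).

Lemma gen_E11 : gen_alg S (E R 1 1).
Proof.
have -> : E R 1 1 = (1 - lam)^-1 *: (l_o lam *m l_o lam + (- lam) *: l_o lam).
  by rewrite /l_o; mx_identity; field_nz.
by gen_close.
Qed.

Lemma gen_D : gen_alg S D.
Proof.
have gE11 := gen_E11.
have -> : D = lam^-1 *: (l_o lam + (-1) *: E R 1 1).
  by rewrite /l_o; mx_identity; field_nz.
by gen_close.
Qed.

Lemma gen_E21 : gen_alg S (E R 2 1).
Proof.
have gE11 := gen_E11.
have -> : E R 2 1 = lam^-1 *: (l_a lam bet *m E R 1 1).
  by rewrite /l_a; mx_identity; field_nz.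
by gen_close.
Qed.

Lemma gen_E31 : gen_alg S (E R 3 1).
Proof.
have gE11 := gen_E11.
have -> : E R 3 1 = lam^-1 *: (l_b lam bet *m E R 1 1).
  by rewrite /l_b; mx_identity; field_nz.
by gen_close.
Qed.

Lemma gen_E41 : gen_alg S (E R 4 1).
Proof.
have gE21 := gen_E21; have gE31 := gen_E31.
have -> : E R 4 1 = l_a lam bet *m E R 3 1 + (- p) *: E R 2 1 + (- q) *: E R 3 1.
  by rewrite /l_a; mx_identity; ring.
by gen_close.
Qed.

Lemma gen_X : gen_alg S X.
Proof.
have gD := gen_D.
have -> : X = D *m l_a lam bet *m D by rewrite /l_a; mx_identity; ring.
by gen_close.
Qed.

Lemma gen_Y : gen_alg S Y.
Proof.
have gD := gen_D.
have -> : Y = D *m l_b lam bet *m D by rewrite /l_b; mx_identity; ring.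
by gen_close.
Qed.

Lemma gen_E42 : gen_alg S (E R 4 2).
Proof.
have gY := gen_Y; have gD := gen_D.
have -> : E R 4 2 = l_b lam bet *m D + (-1) *: Y by rewrite /l_b; mx_identity; ring.
by gen_close.
Qed.

Lemma gen_E43 : gen_alg S (E R 4 3).
Proof.
have gX := gen_X; have gD := gen_D.
have -> : E R 4 3 = l_a lam bet *m D + (-1) *: X by rewrite /l_a; mx_identity; ring.
by gen_close.
Qed.

(* (X - q D)(Y - p D) = p (1 - p) E23 + p q E22 removes the E23 part of
   (1 - p)(X - q D) = (1 - p)(1 - q) E22 + p (1 - p) E23, leaving
   (1 - p - q) E22 = (1 - lam)/lam E22. *)
Lemma gen_E22 : gen_alg S (E R 2 2).
Proof.
have gX := gen_X; have gY := gen_Y; have gD := gen_D.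
have -> : E R 2 2 = (lam / (1 - lam)) *: ((1 - p) *: (X + (- q) *: D)
                     + (-1) *: ((X + (- q) *: D) *m (Y + (- p) *: D))).
  by mx_identity; field_nz.
by gen_close.
Qed.

Lemma gen_E33 : gen_alg S (E R 3 3).
Proof.
have gE22 := gen_E22; have gD := gen_D.
have -> : E R 3 3 = D + (-1) *: E R 2 2 by mx_identity; ring.
by gen_close.
Qed.

Lemma gen_E23 : lam != bet -> gen_alg S (E R 2 3).
Proof.
move=> lam_neq_bet; have p_neq0 : lam - bet != 0 by rewrite subr_eq0.
have gX := gen_X; have gD := gen_D; have gE22 := gen_E22.
have -> : E R 2 3 = p^-1 *: (X + (- q) *: D + (q - 1) *: E R 2 2).
  by mx_identity; field_nz.
by gen_close.
Qed.

Lemma gen_E32 : lam != 1 - bet -> gen_alg S (E R 3 2).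
Proof.
move=> lam_neq; have q_neq0 : lam + bet - 1 != 0.
  by apply: contra lam_neq => /eqP h; apply/eqP; lra.
have gY := gen_Y; have gD := gen_D; have gE33 := gen_E33.
have -> : E R 3 2 = q^-1 *: (Y + (- p) *: D + (p - 1) *: E R 3 3).
  by mx_identity; field_nz.
by gen_close.
Qed.

Lemma gen_delta i j :
  M_support (lam != bet) (lam != 1 - bet) i j -> gen_alg S (delta_mx i j).
Proof.
move: i j; ord4_cases; rewrite /M_support /= ?orbF // => h; rewrite !Ordinal_inord.
all: first [ exact: gen_E11 | exact: gen_E21 | exact: gen_E22 | exact: gen_E31
           | exact: gen_E33 | exact: gen_E41 | exact: gen_E42 | exact: gen_E43
           | exact: gen_E23 h | exact: gen_E32 h ].
Qed.

End Generation.

Theorem gen_alg_gensE (R : realFieldType) (lam bet : R) (A : 'M[R]_4) :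
  lam != 0 -> 1 - lam != 0 ->
  gen_alg (gens lam bet) A <-> mx_supported (M_support (lam != bet) (lam != 1 - bet)) A.
Proof.
move=> lam_neq0 onem_lam_neq0; split; first exact: gen_alg_gens_supported.
have gen_l_o : gen_alg (gens lam bet) (l_o lam) by apply: ga_gen; left.
apply: gen_alg_supported => [|i j]; last apply: gen_delta => //.
- by rewrite -(scale0r (l_o lam)); apply: ga_scale.
- by apply: ga_gen; right; left.
- by apply: ga_gen; right; right.
Qed.

Theorem mainTheorem8 (R : realFieldType) (lam bet : R)
  (hl0 : 0 < lam) (hl1 : lam < 1) (hb0 : 0 < bet) (hb1 : bet < 1) :
  (lam = 1/2 /\ bet = 1/2 ->
     forall A : 'M[R]_4, gen_alg (gens lam bet) A <-> inM0 A) /\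
  (lam <> bet /\ lam = 1 - bet ->
     forall A : 'M[R]_4, gen_alg (gens lam bet) A <-> inM1 A) /\
  (lam = bet /\ lam <> 1 - bet ->
     forall A : 'M[R]_4, gen_alg (gens lam bet) A <-> inM2 A) /\
  (lam <> bet /\ lam <> 1 - bet ->
     forall A : 'M[R]_4, gen_alg (gens lam bet) A <-> inM3 A).
Proof.
have lam_neq0 : lam != 0 by rewrite gt_eqF.
have onem_lam_neq0 : 1 - lam != 0 by rewrite gt_eqF // subr_gt0.
have genE A := gen_alg_gensE bet A lam_neq0 onem_lam_neq0.
split; [|split; [|split]] => -[h1 h2] A; rewrite genE; apply: iff_sym.
- have -> : lam == bet by rewrite h1 h2.
  have -> : lam == 1 - bet by apply/eqP; rewrite h1 h2; lra.
  exact: inM0E.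
- by rewrite (introN eqP h1) (introT eqP h2); apply: inM1E.
- by rewrite (introT eqP h1) (introN eqP h2); apply: inM2E.
- by rewrite (introN eqP h1) (introN eqP h2); apply: inM3E.
Qed.
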